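(* Let $k$ be a positive integer and $\mathbf a\in\mathscr S_k$. Then: (i) if $\mathcal s(\mathbf a)\ge0$ and $\epsilon$ is a real number with $0\le\epsilon\le\mathcal s(\mathbf a)$, then for every positive integer $m\le k$ the matrix $\mathbf a-\epsilon\mathbf e_m$ is formally positive semi-definite; (ii) if $\mathcal s(\mathbf a)\ge0$, then $\mathbf a$ is formally positive semi-definite; (iii) if $\mathcal s(\mathbf a)>0$, then for every positive integer $m$ there exists $\epsilon_m>0$ such that $\mathcal s(\mathbf a-\epsilon_m\mathbf e_m)>0$, and in this case $\mathbf a-\epsilon_m\mathbf e_m$ is formally positive semi-definite.
   Context: Class $\mathscr S_k$: given a $k\times k$ complex matrix $\mathbf b$, complex numbers $c_{k+1},c_{k+2},\dots$ and positive reals $d_{k+1},d_{k+2},\dots$, let $\mathbf a=(a_{m,n})_{m,n\ge1}=\begin{pmatrix}\mathbf b&\mathbf c\\\mathbf c^*&\mathbf d\end{pmatrix}$, where $\mathbf c$ is the $k\times\infty$ matrix all of whose rows equal $(c_{k+1},c_{k+2},\dots)$ and $\mathbf d=\mathrm{diag}(d_{k+1},d_{k+2},\dots)$. Then $\mathbf a\in\mathscr S_k$ if $\mathbf b$ is positive semi-definite and $\sum_{l\ge1}|c_{k+l}|^2/d_{k+l}<\infty$, and $\mathcal s(\mathbf a)=\lambda_{\min}(\mathbf b)-k\sum_{l\ge1}|c_{k+l}|^2/d_{k+l}$, where $\lambda_{\min}$ is the minimal eigenvalue (for a matrix of the same block form, $\mathcal s$ is defined by the same formula). $\mathbf e_m$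 is the infinite matrix with entry $1$ at position $(m,m)$ and $0$ elsewhere. An infinite matrix is formally positive semi-definite if all its finite sections $(x_{p,q})_{p,q\in F}$, $F\subset\mathbb N$ finite, are positive semi-definite. *)

From HB Require Import structures.
From mathcomp Require Import all_boot all_order all_algebra.
From mathcomp Require Import all_classical all_reals all_analysis.
From mathcomp Require Import complex.
Set Implicit Arguments. Unset Strict Implicit. Unset Printing Implicit Defensive.
Import Order.TTheory GRing.Theory Num.Theory numFieldNormedType.Exports.
Local Open Scope ring_scope.
Local Open Scope complex_scope.

Section Defs.
Variable R : realType.
Local Notation C := R[i].

(* Infinite matrices, indexed by positive integers (1-based, as in the
   paper); the entries at index 0 are irrelevant and set to 0 below. *)
Definition infmx := nat -> nat -> C.

Definition bentry (k : nat) (b : 'M[C]_k) (p q : nat) : C :=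
  match (insub p.-1 : option 'I_k), (insub q.-1 : option 'I_k) with
  | Some i, Some j => b i j
  | _, _ => 0
  end.

(* The block matrix  ( b  c ; c^*  d ).  c n = c_n and d n = d_n for n > k. *)
Definition blockmx (k : nat) (b : 'M[C]_k) (c : nat -> C) (d : nat -> R) : infmx :=
  fun p q =>
    if (p == 0%N) || (q == 0%N) then 0
    else if (p <= k)%N then
      (if (q <= k)%N then bentry b p q else c q)
    else if (q <= k)%N then (c p)^*
    else if p == q then (d p)%:C else 0.

Definition emx (m : nat) : infmx :=
  fun p q => if (p == m) && (q == m) then 1 else 0.

Definition mx_sub (x y : infmx) : infmx := fun p q => x p q - y p q.
Definition mx_scale (e : R) (x : infmx) : infmx := fun p q => e%:C * x p q.

(* positive semi-definite complex square matrix: v^* A v >= 0 for all v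
   (in the partial order of C, i.e. real and nonnegative) *)
Definition psd_mx (n : nat) (A : 'M[C]_n) : Prop :=
  forall v : 'cV[C]_n, 0 <= ((map_mx conjc v)^T *m A *m v) 0 0.

(* the finite section of x on F (F a duplicate-free list of positive
   integers, listing a finite subset of N) *)
Definition section (x : infmx) (F : seq nat) : 'M[C]_(size F) :=
  \matrix_(i < size F, j < size F) x (nth 0%N F i) (nth 0%N F j).

Definition formally_psd (x : infmx) : Prop :=
  forall F : seq nat, uniq F -> all (fun p => 0 < p)%N F -> psd_mx (section x F).

(* minimal eigenvalue (of a Hermitian matrix, all eigenvalues being real) *)
Definition lambda_min (k : nat) (b : 'M[C]_k) : R :=
  inf [set r : R | eigenvalue b r%:C].

(* the sequence l |-> |c_{k+l}|^2 / d_{k+l}, l >= 1 (shifted to start at 0) *)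
Definition cd_seq (k : nat) (c : nat -> C) (d : nat -> R) : nat -> R :=
  fun l => (ComplexField.Normc.normc (c (k + l.+1)%N)) ^+ 2 / d (k + l.+1)%N.

Definition cd_sum (k : nat) (c : nat -> C) (d : nat -> R) : R :=
  limn (series (cd_seq k c d)).

Definition block_data (k : nat) (b : 'M[C]_k) (c : nat -> C) (d : nat -> R) : Prop :=
  (forall n, (k < n)%N -> 0 < d n) /\ cvgn (series (cd_seq k c d)).

Definition in_S (k : nat) (b : 'M[C]_k) (c : nat -> C) (d : nat -> R) : Prop :=
  psd_mx b /\ block_data b c d.

Definition sval_s (k : nat) (b : 'M[C]_k) (c : nat -> C) (d : nat -> R) : R :=
  lambda_min b - k%:R * cd_sum k c d.

End Defs.
Arguments emx {R} m _ _.

From HB Require Import structures.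
From mathcomp Require Import all_boot all_order all_algebra.
From mathcomp Require Import all_classical all_reals all_analysis.
From mathcomp Require Import complex.
From mathcomp Require Import ring lra zify.
Import Order.TTheory GRing.Theory Num.Theory numFieldNormedType.Exports.
Set Implicit Arguments. Unset Strict Implicit. Unset Printing Implicit Defensive.
Local Open Scope ring_scope.

(* For a finite section with coordinate vector v, let w collect the coordinates
   with index at most k (as a vector of C^k) and let S be their sum.  The quadratic
   form of the section is then w^* b w + sum_(q > k) (2 Re (S^* c_q v_q) + d_q |v_q|^2).
   Completing the square in each v_q bounds the sum below by -|S|^2 sum_q |c_q|^2/d_q,
   and Cauchy-Schwarz gives |S|^2 <= k |w|^2; with w^* b w >= lambda_min(b) |w|^2 the
   form is at least s(a) |w|^2 >= 0.  Subtracting eps e_m lowers lambda_min(b) by at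
   most eps when m <= k; when m > k it replaces d_m by d_m - eps, which raises the
   series sum_q |c_q|^2/d_q by an amount tending to 0 with eps. *)

Section QuadraticForms.
Local Open Scope complex_scope.
Variable R : realType.
Local Notation C := R[i].

Definition sform n (A : 'M[C]_n) (u v : 'cV[C]_n) : C :=
  ((map_mx conjc u)^T *m A *m v) 0 0.
Definition qform n (A : 'M[C]_n) (v : 'cV[C]_n) : C := sform A v v.
Definition sqnorm n (v : 'cV[C]_n) : C := qform 1%:M v.

Lemma mulJc_ge0 (x : C) : 0 <= x^* * x.
Proof. by rewrite mulrC mulcJ_ge0. Qed.

Lemma qformE n (A : 'M[C]_n) v :
  qform A v = \sum_i \sum_j (v i 0)^* * A i j * v j 0.
Proof.
rewrite /qform /sform mxE; under eq_bigr do rewrite mxE big_distrl /=.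
by rewrite exchange_big; apply: eq_bigr => i _; apply: eq_bigr => j _; rewrite !mxE.
Qed.

Lemma sqnormE n (v : 'cV[C]_n) : sqnorm v = \sum_i (v i 0)^* * v i 0.
Proof. by rewrite /sqnorm /qform /sform mulmx1 mxE; apply: eq_bigr => i _; rewrite !mxE. Qed.

Lemma sqnorm_ge0 n (v : 'cV[C]_n) : 0 <= sqnorm v.
Proof. by rewrite sqnormE sumr_ge0 // => i _; apply: mulJc_ge0. Qed.

Lemma sqnorm_gt0 n (v : 'cV[C]_n) : v != 0 -> 0 < sqnorm v.
Proof.
move=> v0; rewrite lt_def sqnorm_ge0 andbT; apply: contra v0.
rewrite sqnormE psumr_eq0 => [/allP v_eq0|i _]; last exact: mulJc_ge0.
apply/eqP/colP => i; have := v_eq0 i (mem_index_enum _).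
by rewrite mulf_eq0 conjc_eq0 orbb mxE => /eqP.
Qed.

Lemma qform_row_eigen n (H : 'M[C]_n) (x : 'rV[C]_n) a : x *m H = a *: x ->
  qform H (map_mx conjc x)^T = a * sqnorm (map_mx conjc x)^T.
Proof.
have xK : (map_mx conjc (map_mx conjc x)^T)^T = x.
  by apply/rowP => j; rewrite !mxE conjcK.
by rewrite /sqnorm /qform /sform !xK mulmx1 => ->; rewrite -scalemxAl mxE.
Qed.

Lemma eigenvalue_ge n (H : 'M[C]_n) (mu : R) a :
  (forall v, mu%:C * sqnorm v <= qform H v) -> eigenvalue H a -> mu%:C <= a.
Proof.
move=> H_ge /eigenvalueP [x /qform_row_eigen Hx x0].
have x'0 : (map_mx conjc x)^T != 0.
  apply: contra x0 => /eqP x'_eq0; apply/eqP/rowP => j.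
  by move/colP/(_ j)/eqP: x'_eq0; rewrite !mxE conjc_eq0 => /eqP.
have := H_ge (map_mx conjc x)^T.
by rewrite Hx -subr_ge0 -mulrBl pmulr_lge0 ?sqnorm_gt0 // subr_ge0.
Qed.

Lemma lambda_min_ge n (H : 'M[C]_n.+1) (mu : R) :
  (forall v, mu%:C * sqnorm v <= qform H v) -> mu <= lambda_min H.
Proof.
move=> H_ge; apply: lb_le_inf => [|r /= /(eigenvalue_ge H_ge)]; last by rewrite lecR.
have [a Ha] := eigenvalue_closed H (ltn0Sn n).
have := eigenvalue_ge H_ge Ha; rewrite lecE /= => /andP [/eqP Ima _].
by exists (complex.Re a); case: a Ha Ima => ar ai /= Ha Ima; rewrite Ima in Ha.
Qed.

Lemma sformDl n (A : 'M[C]_n) u1 u2 w : sform A (u1 + u2) w = sform A u1 w + sform A u2 w.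
Proof. by rewrite /sform raddfD /= linearD /= !mulmxDl mxE. Qed.

Lemma sformDr n (A : 'M[C]_n) u w1 w2 : sform A u (w1 + w2) = sform A u w1 + sform A u w2.
Proof. by rewrite /sform mulmxDr mxE. Qed.

Lemma sformZl n (A : 'M[C]_n) z u w : sform A (z *: u) w = z^* * sform A u w.
Proof.
rewrite /sform (_ : map_mx conjc (z *: u) = z^* *: map_mx conjc u).
  by rewrite linearZ /= -!scalemxAl mxE.
by apply/matrixP => i j; rewrite !mxE rmorphM.
Qed.

Lemma sformZr n (A : 'M[C]_n) z u w : sform A u (z *: w) = z * sform A u w.
Proof. by rewrite /sform -!scalemxAr mxE. Qed.

Lemma sform_delta n (A : 'M[C]_n) i j : sform A (delta_mx i 0) (delta_mx j 0) = A i j.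
Proof.
rewrite /sform (_ : map_mx conjc (delta_mx i 0) = delta_mx i 0).
  by rewrite trmx_delta -rowE -colE !mxE.
by apply/matrixP => a b; rewrite !mxE conjc_nat.
Qed.

(* Polarisation: the form is real at e_i + e_j and at e_i + 'i e_j. *)
Lemma psd_mx_hermitian n (A : 'M[C]_n) : psd_mx A -> A \is hermsymmx.
Proof.
move=> psdA; apply/is_hermitianmxP; rewrite expr0 scale1r.
apply/matrixP => i j; rewrite !mxE.
have real_qf v : sform A v v \is Num.real by apply: ger0_real; apply: psdA.
have := real_qf (delta_mx i 0 + delta_mx j 0).
have := real_qf (delta_mx i 0 + 'i *: delta_mx j 0).
have := real_qf (delta_mx i 0); have := real_qf (delta_mx j 0).
rewrite !(sformDl, sformDr, sformZl, sformZr, sform_delta).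
change (Num.conj_op (A j i)) with (A j i)^*.
case: (A i j) (A j i) (A i i) (A j j) => [xa xb] [ya yb] [za zb] [wa wb].
rewrite /= !complex_real => /eqP ? /eqP ? /eqP ? /eqP ?; congr (_ +i* _); lra.
Qed.

Lemma eigenvalue_spectral_diag n (A : 'M[C]_n) i :
  A \is normalmx -> eigenvalue A (spectral_diag A 0 i).
Proof.
move=> /orthomx_spectralP A_eq; have P_unit := spectral_unit A.
set P := spectralmx A in A_eq P_unit *; set D := spectral_diag A in A_eq *.
apply/eigenvalueP; exists (row i P).
  rewrite -row_mul A_eq !mulmxA mulmxV // mul1mx mul_diag_mx.
  by apply/rowP => j; rewrite !mxE.
apply: contraTneq isT => /(congr1 (mulmx^~ (invmx P))).
by rewrite -row_mul mulmxV // mul0mx => /rowP /(_ i) /eqP; rewrite !mxE eqxx oner_eq0.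
Qed.

Lemma qform_diag n (D : 'rV[C]_n) u :
  qform (diag_mx D) u = \sum_i D 0 i * ((u i 0)^* * u i 0).
Proof.
rewrite /qform /sform mul_mx_diag mxE; apply: eq_bigr => i _.
by rewrite !mxE mulrCA mulrA.
Qed.

Lemma rayleigh_lambda_min n (A : 'M[C]_n) v :
  psd_mx A -> (lambda_min A)%:C * sqnorm v <= qform A v.
Proof.
move=> psdA; have A_herm := psd_mx_hermitian psdA.
have /hermitian_normalmx/orthomx_spectralP A_eq := A_herm.
set P := spectralmx A in A_eq; set D := spectral_diag A in A_eq.
have P_unit : P \in unitmx := spectral_unit A.
have PV : invmx P = (map_mx conjc P)^T.
  by rewrite invmx_unitary ?spectral_unitarymx // map_trmx.
have D_real i : D 0 i = (complex.Re (D 0 i))%:C.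
  have /mxOverP/(_ 0 i) := hermitian_spectral_diag_real A_herm.
  by case: (D 0 i) => a b /=; rewrite complex_real => /eqP ->.
have lambda_le i : lambda_min A <= complex.Re (D 0 i).
  apply: ge_inf; last by rewrite /= -D_real; exact/eigenvalue_spectral_diag/hermitian_normalmx.
  exists 0 => r /= /(@eigenvalue_ge _ A 0); rewrite lecR; apply=> w.
  by rewrite mul0r; apply: psdA.
have -> : qform A v = qform (diag_mx D) (P *m v).
  by rewrite /qform /sform {1}A_eq map_mxM trmx_mul PV !mulmxA.
have -> : sqnorm v = sqnorm (P *m v).
  rewrite /sqnorm /qform /sform !mulmx1 map_mxM trmx_mul -mulmxA (mulmxA _ P).
  by rewrite -PV mulVmx // mul1mx.
rewrite qform_diag sqnormE mulr_sumr; apply: ler_sum => i _.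
by rewrite [in X in _ <= X]D_real ler_wpM2r ?mulJc_ge0 ?lecR.
Qed.

Lemma qform_sub_scale_delta n (A : 'M[C]_n) (mu e : R) i :
  0 <= e -> (forall v, mu%:C * sqnorm v <= qform A v) ->
  forall v, (mu - e)%:C * sqnorm v <= qform (A - e%:C *: delta_mx i i) v.
Proof.
move=> e_ge0 A_ge v.
have -> : qform (A - e%:C *: delta_mx i i) v = qform A v - e%:C * ((v i 0)^* * v i 0).
  rewrite /qform /sform mulmxBr mulmxBl -scalemxAr -scalemxAl.
  rewrite -(mul_delta_mx (0 : 'I_1)) !mulmxA -colE -(mulmxA (col _ _)) -rowE.
  by rewrite !mxE big_ord1 !mxE.
rewrite rmorphB mulrBl lerB // ler_wpM2l ?ler0c // sqnormE (bigD1 i) //= lerDl.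
by apply: sumr_ge0 => j _; apply: mulJc_ge0.
Qed.

End QuadraticForms.

Section ConjugateSums.
Variable C : numClosedFieldType.

Lemma sqr_sum_le n (x : 'I_n -> C) :
  (\sum_p x p)^* * (\sum_p x p) <= n%:R * \sum_p (x p)^* * x p.
Proof.
case: n x => [|n] x; first by rewrite !big_ord0 mulr0.
set S := \sum_p x p; set m := S / n.+1%:R.
have n_neq0 : (n.+1%:R : C) != 0 by rewrite pnatr_eq0.
have : 0 <= \sum_p (x p - m)^* * (x p - m).
  by apply: sumr_ge0 => p _; rewrite mulrC mul_conjC_ge0.
have -> : \sum_p (x p - m)^* * (x p - m) = \sum_p (x p)^* * x p - S^* * S / n.+1%:R.
  under eq_bigr do rewrite rmorphB mulrBl !mulrBr.
  rewrite !sumrB -!mulr_suml -!mulr_sumr sumr_const card_ord -rmorph_sum.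
  by rewrite -/S /m fmorph_div rmorph_nat; field.
by rewrite subr_ge0 ler_pdivrMr ?ltr0n // [X in _ <= X]mulrC.
Qed.

Lemma complete_square_ge (S c x D : C) : 0 < D ->
  - (S^* * S * (c * c^* / D)) <= S^* * (c * x) + c^* * x^* * S + D * (x^* * x).
Proof.
move=> D_gt0; have D_neq0 : D != 0 by rewrite gt_eqF.
set z := D * x + c^* * S.
rewrite -subr_ge0 opprK (_ : _ + S^* * S * _ = z^* * z / D).
  by apply: divr_ge0; [rewrite mulrC mul_conjC_ge0 | exact: ltW].
by rewrite /z rmorphD !rmorphM /= conjCK (conj_Creal (gtr0_real D_gt0)); field.
Qed.

Lemma sum_mul_partition n K (lo : pred 'I_n) (pi : 'I_n -> 'I_K) (h : 'I_n -> C) (g : 'I_K -> C) :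
  \sum_(i | lo i) h i * g (pi i) = \sum_p (\sum_(i | lo i && (pi i == p)) h i) * g p.
Proof.
rewrite (partition_big pi xpredT) //=; apply: eq_bigr => p _.
by rewrite mulr_suml; apply: eq_bigr => i /andP [_ /eqP ->].
Qed.

End ConjugateSums.

Section SchurComplementBounds.
Local Open Scope complex_scope.
Variable R : realType.
Local Notation C := R[i].

Lemma qform_push n K (lo : pred 'I_n) (pi : 'I_n -> 'I_K) (B : 'M[C]_K) (v : 'cV[C]_n) :
  \sum_(i | lo i) \sum_(j | lo j) (v i 0)^* * B (pi i) (pi j) * v j 0 =
  qform B (\col_p \sum_(i | lo i && (pi i == p)) v i 0).
Proof.
set w := \col_p _; pose g p := \sum_q B p q * w q 0.
have row_sum i : \sum_(j | lo j) (v i 0)^* * B (pi i) (pi j) * v j 0 = (v i 0)^* * g (pi i).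
  rewrite /g (eq_bigr (fun q => (\sum_(j | lo j && (pi j == q)) v j 0) * B (pi i) q)).
    rewrite -(sum_mul_partition lo pi (fun j => v j 0) (B (pi i))) mulr_sumr.
    by apply: eq_bigr => j _; rewrite [v j 0 * _]mulrC mulrA.
  by move=> q _; rewrite mxE mulrC.
rewrite (eq_bigr _ (fun i _ => row_sum i)) sum_mul_partition qformE.
apply: eq_bigr => p _; rewrite -rmorph_sum mulr_sumr; apply: eq_bigr => q _.
by rewrite mulrA [w p 0]mxE.
Qed.

Definition cd_term (c : nat -> C) (d : nat -> R) (q : nat) : R :=
  ComplexField.Normc.normc (c q) ^+ 2 / d q.

Lemma cd_term_ge0 c d q : 0 < d q -> 0 <= cd_term c d q.
Proof. by move=> d_gt0; rewrite divr_ge0 ?sqr_ge0 ?ltW. Qed.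

Lemma mulcJ_normc (x : C) : x * x^* = (ComplexField.Normc.normc x ^+ 2)%:C.
Proof.
case: x => a b /=; rewrite sqr_sqrtr ?addr_ge0 ?sqr_ge0 //.
by congr (_ +i* _); ring.
Qed.

Lemma sum_cd_term_le k (c : nat -> C) (d : nat -> R) (s : seq nat) :
  (forall n, (k < n)%N -> 0 < d n) -> cvgn (series (cd_seq k c d)) ->
  uniq s -> all (fun q => k < q)%N s -> \sum_(q <- s) cd_term c d q <= cd_sum k c d.
Proof.
move=> d_gt0 cd_cvg s_uniq /allP s_gtk.
set N := (\max_(q <- s) q)%N.
have -> : \sum_(q <- s) cd_term c d q = \sum_(q <- iota k.+1 N | q \in s) cd_term c d q.
  rewrite -[in RHS]big_filter; apply: perm_big; apply: uniq_perm => //.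
    exact/filter_uniq/iota_uniq.
  move=> q; rewrite mem_filter mem_iota andbC; case s_q: (q \in s); last by rewrite andbF.
  have := @leq_bigmax_seq _ s xpredT id q s_q isT; have := s_gtk q s_q; rewrite -/N /=; lia.
apply: (@le_trans _ _ (\sum_(q <- iota k.+1 N) cd_term c d q)).
  rewrite big_mkcond /= big_seq [X in _ <= X]big_seq; apply: ler_sum => q.
  by rewrite mem_iota => /andP [k_q _]; case: ifP => // _; apply/cd_term_ge0/d_gt0.
have -> : \sum_(q <- iota k.+1 N) cd_term c d q = series (cd_seq k c d) N.
  rewrite /series /= -(addn0 k.+1) iotaDl big_map /index_iota subn0.
  by apply: eq_bigr => l _; rewrite addSnnS.
apply: nondecreasing_cvgn_le => //; apply: nondecreasing_series => l _ _.
by apply/cd_term_ge0/d_gt0; lia.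
Qed.

End SchurComplementBounds.

Section BlockSections.
Local Open Scope complex_scope.
Variables (R : realType) (K : nat).
Local Notation C := R[i].
Variables (b : 'M[C]_K.+1) (c : nat -> C) (d : nat -> R).

Lemma bentryE p q : (0 < p <= K.+1)%N -> (0 < q <= K.+1)%N ->
  bentry b p q = b (inord p.-1) (inord q.-1).
Proof.
move=> /andP [p_gt0 p_le] /andP [q_gt0 q_le]; rewrite /bentry.
case: insubP => [i _ i_val|/negP []]; last by rewrite prednK.
case: insubP => [j _ j_val|/negP []]; last by rewrite prednK.
by congr (b _ _); apply: val_inj; rewrite /= inordK ?i_val ?j_val // prednK.
Qed.

Variables (F : seq nat) (v : 'cV[C]_(size F)).
Hypotheses (F_uniq : uniq F) (F_pos : all (fun p => 0 < p)%N F).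

Let f (i : 'I_(size F)) := nth 0%N F i.
Let lo i := (f i <= K.+1)%N.
Let pi i : 'I_K.+1 := inord (f i).-1.

Lemma section_blockmxE i j : section (blockmx b c d) F i j =
  if lo i then (if lo j then b (pi i) (pi j) else c (f j))
  else if lo j then (c (f i))^* else if i == j then (d (f i))%:C else 0.
Proof.
have f_gt0 l : (0 < f l)%N by apply: (allP F_pos); exact: mem_nth.
rewrite mxE /blockmx -/(f i) -/(f j).
rewrite (negbTE (lt0n_neq0 (f_gt0 i))) (negbTE (lt0n_neq0 (f_gt0 j))) /= /lo.
case: ifP => f_i; case: ifP => f_j //; first by rewrite bentryE ?f_gt0.
by rewrite nth_uniq.
Qed.

Lemma qform_section_blockmx :
  let S := \sum_(i | lo i) v i 0 in
  qform (section (blockmx b c d) F) v =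
  qform b (\col_p \sum_(i | lo i && (pi i == p)) v i 0) +
  \sum_(i | ~~ lo i) (S^* * (c (f i) * v i 0) + (c (f i))^* * (v i 0)^* * S +
                      (d (f i))%:C * ((v i 0)^* * v i 0)).
Proof.
move=> S; set Y := \sum_(j | ~~ lo j) c (f j) * v j 0.
have low_row i : lo i -> \sum_j (v i 0)^* * section (blockmx b c d) F i j * v j 0 =
    \sum_(j | lo j) (v i 0)^* * b (pi i) (pi j) * v j 0 + (v i 0)^* * Y.
  move=> lo_i; rewrite (bigID lo) /= mulr_sumr; congr (_ + _); apply: eq_bigr => j lo_j.
    by rewrite section_blockmxE lo_i lo_j.
  by rewrite section_blockmxE lo_i (negbTE lo_j) mulrA.
have high_row i : ~~ lo i -> \sum_j (v i 0)^* * section (blockmx b c d) F i j * v j 0 =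
    (c (f i))^* * (v i 0)^* * S + (d (f i))%:C * ((v i 0)^* * v i 0).
  move=> hi_i; rewrite (bigID lo) /= mulr_sumr; congr (_ + _).
    by apply: eq_bigr => j lo_j; rewrite section_blockmxE (negbTE hi_i) lo_j [_ * (c _)^*]mulrC.
  rewrite (bigD1 i) //= big1 ?addr0 => [|j /andP [hi_j j_neq_i]].
    by rewrite section_blockmxE (negbTE hi_i) eqxx mulrAC mulrC.
  by rewrite section_blockmxE (negbTE hi_i) (negbTE hi_j) eq_sym (negbTE j_neq_i) mulr0 mul0r.
rewrite qformE (bigID lo) /= (eq_bigr _ low_row) (eq_bigr _ high_row) big_split /=.
rewrite qform_push -addrA; congr (_ + _).
rewrite -mulr_suml -rmorph_sum -/S /Y mulr_sumr -big_split /=.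
by apply: eq_bigr => i _; rewrite addrA.
Qed.

End BlockSections.

Section BlockPsd.
Local Open Scope complex_scope.
Variable R : realType.
Local Notation C := R[i].

Lemma sum_section_cd_term_le K (c : nat -> C) (d : nat -> R) (F : seq nat) :
  (forall n, (K < n)%N -> 0 < d n) -> cvgn (series (cd_seq K c d)) -> uniq F ->
  \sum_(i < size F | ~~ (nth 0 F i <= K)%N) cd_term c d (nth 0 F i) <= cd_sum K c d.
Proof.
move=> d_gt0 cd_cvg F_uniq; under eq_bigl do rewrite -ltnNge.
rewrite -(big_mkord (fun i => K < nth 0 F i)%N (fun i => cd_term c d (nth 0 F i))).
rewrite -(big_nth 0%N) -big_filter; apply: sum_cd_term_le => //.
  exact: filter_uniq.
exact: filter_all.
Qed.

Lemma blockmx_formally_psd K (b : 'M[C]_K.+1) (c : nat -> C) (d : nat -> R) (mu : R) :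
  (forall w, mu%:C * sqnorm w <= qform b w) ->
  (forall n, (K.+1 < n)%N -> 0 < d n) -> cvgn (series (cd_seq K.+1 c d)) ->
  K.+1%:R * cd_sum K.+1 c d <= mu -> formally_psd (blockmx b c d).
Proof.
move=> b_ge d_gt0 cd_cvg cd_le F F_uniq F_pos v.
change (0 <= qform (section (blockmx b c d) F) v).
rewrite qform_section_blockmx //.
set lo := fun i : 'I_(size F) => (nth 0 F i <= K.+1)%N.
set S := \sum_(i | lo i) v i 0; set w := \col_p _.
set G := \sum_(i | ~~ lo i) cd_term c d (nth 0 F i).
have d_F_gt0 i : ~~ lo i -> 0 < d (nth 0 F i) by rewrite -ltnNge; apply: d_gt0.
have tail_ge : - (S^* * S * G%:C) <= \sum_(i | ~~ lo i) (S^* * (c (nth 0 F i) * v i 0) +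
    (c (nth 0 F i))^* * (v i 0)^* * S + (d (nth 0 F i))%:C * ((v i 0)^* * v i 0)).
  rewrite (_ : G%:C = \sum_(i | ~~ lo i) (cd_term c d (nth 0 F i))%:C); last first.
    by rewrite rmorph_sum.
  rewrite mulr_sumr -sumrN; apply: ler_sum => i hi_i.
  rewrite /cd_term rmorphM rmorphV ?unitfE ?gt_eqF ?d_F_gt0 //= -mulcJ_normc.
  by apply: complete_square_ge; rewrite ltcR d_F_gt0.
have S_le : S^* * S <= K.+1%:R * sqnorm w.
  have -> : S = \sum_p w p 0.
    transitivity (\sum_(i | lo i) v i 0 * 1); first by under eq_bigr do rewrite mulr1.
    rewrite (@sum_mul_partition _ _ K.+1 lo (fun i => inord (nth 0 F i).-1)
      (fun i => v i 0) (fun _ => 1)).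
    by apply: eq_bigr => p _; rewrite mulr1 mxE.
  by rewrite sqnormE; apply: sqr_sum_le.
have G_le : G <= cd_sum K.+1 c d by apply: sum_section_cd_term_le.
have G_ge0 : 0 <= G by apply: sumr_ge0 => i /d_F_gt0 /cd_term_ge0.
apply: le_trans (lerD (lexx (qform b w)) tail_ge).
apply: (@le_trans _ _ ((mu - K.+1%:R * cd_sum K.+1 c d)%:C * sqnorm w)).
  by rewrite mulr_ge0 ?sqnorm_ge0 // ler0c subr_ge0.
rewrite rmorphB rmorphM rmorph_nat mulrBl lerB //.
by rewrite [X in _ <= X]mulrAC ler_pM ?mulJc_ge0 ?ler0c ?lecR.
Qed.

End BlockPsd.

Section Perturbations.
Local Open Scope complex_scope.
Variable R : realType.
Local Notation C := R[i].

Lemma formally_psd_ext (x y : infmx R) :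
  (forall p q, (0 < p)%N -> (0 < q)%N -> x p q = y p q) ->
  formally_psd y -> formally_psd x.
Proof.
move=> xy psd_y F F_uniq F_pos; have -> : section x F = section y F; last exact: psd_y.
by apply/matrixP => i j; rewrite !mxE xy //; apply: (allP F_pos); exact: mem_nth.
Qed.

Lemma blockmx_sub_emx_low K (b : 'M[C]_K.+1) c d (e : R) m : (0 < m <= K.+1)%N ->
  forall p q, (0 < p)%N -> (0 < q)%N ->
  mx_sub (blockmx b c d) (mx_scale e (emx m)) p q =
  blockmx (b - e%:C *: delta_mx (inord m.-1) (inord m.-1)) c d p q.
Proof.
move=> m_bd p q p_gt0 q_gt0; rewrite /mx_sub /mx_scale /emx /blockmx.
rewrite (negbTE (lt0n_neq0 p_gt0)) (negbTE (lt0n_neq0 q_gt0)) /=.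
have inord_eq n : (0 < n <= K.+1)%N -> (inord n.-1 == inord m.-1 :> 'I_K.+1) = (n == m).
  by move=> n_bd; rewrite -val_eqE /= !inordK; lia.
case: ifP => p_le; case: ifP => q_le.
- rewrite !bentryE ?p_gt0 ?q_gt0 // !mxE !inord_eq ?p_gt0 ?q_gt0 //.
  by case: (p == m); case: (q == m); rewrite /= ?mulr1 ?mulr0.
- by rewrite (_ : q == m = false) ?andbF ?mulr0 ?subr0 //; apply/negbTE/eqP; lia.
- by rewrite (_ : p == m = false) ?mulr0 ?subr0 //; apply/negbTE/eqP; lia.
- by rewrite (_ : p == m = false) ?mulr0 ?subr0 //; apply/negbTE/eqP; lia.
Qed.

Lemma blockmx_sub_emx_high K (b : 'M[C]_K.+1) c d (e : R) m : (K.+1 < m)%N ->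
  forall p q, (0 < p)%N -> (0 < q)%N ->
  mx_sub (blockmx b c d) (mx_scale e (emx m)) p q =
  blockmx b c (fun n => if n == m then d m - e else d n) p q.
Proof.
move=> m_gt p q p_gt0 q_gt0; rewrite /mx_sub /mx_scale /emx /blockmx.
rewrite (negbTE (lt0n_neq0 p_gt0)) (negbTE (lt0n_neq0 q_gt0)) /=.
case: ifP => p_le.
  by rewrite (_ : p == m = false) ?mulr0 ?subr0; [case: ifP | apply/negbTE/eqP; lia].
case: ifP => q_le.
  by rewrite (_ : q == m = false) ?andbF ?mulr0 ?subr0 //; apply/negbTE/eqP; lia.
case: (eqVneq p q) => [<-|p_neq_q].
  by case: eqP => [->|]; rewrite ?mulr1 ?rmorphB ?mulr0 ?subr0.
rewrite (_ : (p == m) && (q == m) = false) ?mulr0 ?subr0 //.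
by apply/negbTE; apply: contra p_neq_q => /andP [/eqP -> /eqP ->].
Qed.

Lemma cvg_series_delta (l0 : nat) (e : R) :
  (series (fun l => if l == l0 then e else 0) @ \oo --> e)%classic.
Proof.
apply: cvg_near_cst; exists l0.+1 => // N /= N_gt.
rewrite /series /= (bigD1_seq l0) ?mem_index_iota ?iota_uniq //= eqxx.
by rewrite big1 ?addr0 // => l /negbTE ->.
Qed.

Lemma block_data_shift K (b : 'M[C]_K.+1) c d m (eps : R) :
  (K.+1 < m)%N -> eps < d m -> block_data b c d ->
  let d' := fun n => if n == m then d m - eps else d n in
  block_data b c d' /\
  cd_sum K.+1 c d' = cd_sum K.+1 c d + (cd_term c d' m - cd_term c d m).
Proof.
move=> m_gt eps_lt [d_gt0 cd_cvg] d'.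
set delta := cd_term c d' m - cd_term c d m.
have cd_seqE : cd_seq K.+1 c d' =
    (cd_seq K.+1 c d \+ (fun l => if l == (m - K.+2)%N then delta else 0))%R.
  apply/funext => l /=; rewrite /cd_seq; case: (eqVneq l (m - K.+2)%N) => [->|l_neq].
    by rewrite (_ : (K.+1 + (m - K.+2).+1)%N = m) 1?addrC ?subrK //; lia.
  by rewrite addr0 /cd_term /d' ifN_eq //; apply/eqP; lia.
have delta_cvg := @cvg_series_delta (m - K.+2) delta.
have cd'_cvg : cvgn (series (cd_seq K.+1 c d')).
  by rewrite cd_seqE; apply: is_cvg_seriesD => //; exact: cvgP delta_cvg.
split; first split => // n n_gt.
  by rewrite /d'; case: eqP => _; [rewrite subr_gt0 | apply: d_gt0].
by rewrite /cd_sum cd_seqE lim_seriesD ?(cvg_lim _ delta_cvg) //; exact: cvgP delta_cvg.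
Qed.

Lemma lambda_min_sub_scale_delta n (b : 'M[C]_n.+1) (e : R) i :
  psd_mx b -> 0 <= e -> lambda_min b - e <= lambda_min (b - e%:C *: delta_mx i i).
Proof.
move=> psd_b e_ge0; apply/lambda_min_ge/qform_sub_scale_delta => // v.
exact: rayleigh_lambda_min.
Qed.

Lemma exists_small_inv_increment (s D A k : R) : 0 < s -> 0 < D -> 0 <= A -> 0 <= k ->
  exists2 eps, 0 < eps < D & k * (A / (D - eps) - A / D) < s.
Proof.
move=> s_gt0 D_gt0 A_ge0 k_ge0; have kA_ge0 : 0 <= k * A by rewrite mulr_ge0.
have incrE t : 0 < t -> k * (A / (D - D * t / (1 + t)) - A / D) = k * A * t / D.
  by move=> t_gt0; field; apply/andP; split; apply: lt0r_neq0; lra.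
have [t t_gt0 t_small] : exists2 t, 0 < t & k * A * t / D < s.
  exists (s * D / (2 * (k * A + 1))); first by apply: divr_gt0; [exact: mulr_gt0 | lra].
  have -> : k * A * (s * D / (2 * (k * A + 1))) / D = s * (k * A / (2 * (k * A + 1))).
    by field; apply/andP; split; apply: lt0r_neq0; lra.
  by rewrite -[X in _ < X]mulr1 ltr_pM2l // ltr_pdivrMr; lra.
exists (D * t / (1 + t)); last by rewrite incrE.
apply/andP; split; first by apply: divr_gt0; [exact: mulr_gt0 | lra].
by rewrite ltr_pdivrMr; nra.
Qed.

End Perturbations.

Section PerturbedBlocks.
Local Open Scope complex_scope.
Variables (R : realType) (K : nat) (b : 'M[R[i]]_K.+1) (c : nat -> R[i]) (d : nat -> R).
Hypothesis b_c_d_in_S : in_S b c d.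

Definition sub_emx_in_S (eps : R) (m : nat) : Prop :=
  exists (b' : 'M[R[i]]_K.+1) (c' : nat -> R[i]) (d' : nat -> R),
    block_data b' c' d' /\
    (forall p q, (0 < p)%N -> (0 < q)%N ->
       blockmx b' c' d' p q = mx_sub (blockmx b c d) (mx_scale eps (emx m)) p q) /\
    0 < sval_s b' c' d'.

Lemma formally_psd_blockmx : 0 <= sval_s b c d -> formally_psd (blockmx b c d).
Proof.
case: b_c_d_in_S => psd_b [d_gt0 cd_cvg] s_ge0.
apply: (blockmx_formally_psd _ d_gt0 cd_cvg).
  by move=> v; apply: rayleigh_lambda_min.
by move: s_ge0; rewrite /sval_s subr_ge0.
Qed.

Lemma formally_psd_sub_emx_low (eps : R) m : 0 <= eps -> eps <= sval_s b c d ->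
  (0 < m <= K.+1)%N -> formally_psd (mx_sub (blockmx b c d) (mx_scale eps (emx m))).
Proof.
case: b_c_d_in_S => psd_b [d_gt0 cd_cvg] eps_ge0 eps_le m_bd.
apply: formally_psd_ext (blockmx_sub_emx_low b c d eps m_bd) _.
apply: (blockmx_formally_psd (mu := lambda_min b - eps) _ d_gt0 cd_cvg).
  by apply: qform_sub_scale_delta => // v; apply: rayleigh_lambda_min.
by move: eps_le; rewrite /sval_s; lra.
Qed.

Lemma sub_emx_low_in_S m : 0 < sval_s b c d -> (0 < m <= K.+1)%N ->
  exists eps, 0 < eps /\ sub_emx_in_S eps m /\
    formally_psd (mx_sub (blockmx b c d) (mx_scale eps (emx m))).
Proof.
move=> s_gt0 m_bd; have [psd_b b_c_d] := b_c_d_in_S.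
pose eps := sval_s b c d / 2; have eps_gt0 : 0 < eps by rewrite divr_gt0.
exists eps; split=> //; split; last first.
  by apply: formally_psd_sub_emx_low => //; [exact: ltW | rewrite /eps; lra].
exists (b - eps%:C *: delta_mx (inord m.-1) (inord m.-1)), c, d.
(* [block_data] only depends on the size of its matrix argument. *)
split; first exact: b_c_d.
split.
  by move=> p q p_gt0 q_gt0; rewrite (blockmx_sub_emx_low b c d eps m_bd).
have := lambda_min_sub_scale_delta (inord m.-1) psd_b (ltW eps_gt0).
rewrite /sval_s; move: (lambda_min (b - _)) => L'.
by move: s_gt0; rewrite /eps /sval_s; lra.
Qed.

Lemma sub_emx_high_in_S m : 0 < sval_s b c d -> (K.+1 < m)%N ->
  exists eps, 0 < eps /\ sub_emx_in_S eps m /\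
    formally_psd (mx_sub (blockmx b c d) (mx_scale eps (emx m))).
Proof.
move=> s_gt0 m_gt; have [psd_b [d_gt0 cd_cvg]] := b_c_d_in_S.
have [eps /andP [eps_gt0 eps_lt] shift_lt] := exists_small_inv_increment s_gt0
  (d_gt0 m m_gt) (sqr_ge0 (ComplexField.Normc.normc (c m))) (ler0n _ K.+1).
have [b_c_d' cd_sumE] := block_data_shift (b := b) m_gt eps_lt (conj d_gt0 cd_cvg).
set d' := fun n => _ in b_c_d' cd_sumE.
have s'_gt0 : 0 < sval_s b c d'.
  move: s_gt0 shift_lt; rewrite /sval_s cd_sumE /cd_term /d' eqxx mulrDr.
  by move: (lambda_min b) (cd_sum _ c d) => L T; lra.
exists eps; split=> //; split.
  exists b, c, d'; split; first exact: b_c_d'.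
  by split=> // p q p_gt0 q_gt0; rewrite blockmx_sub_emx_high.
apply: formally_psd_ext (blockmx_sub_emx_high b c d eps m_gt) _.
case: b_c_d' => d'_gt0 cd'_cvg.
apply: (blockmx_formally_psd (mu := lambda_min b) _ d'_gt0 cd'_cvg).
  by move=> v; apply: rayleigh_lambda_min.
by move: s'_gt0; rewrite /sval_s; move: (lambda_min b) (cd_sum _ c d') => L T; lra.
Qed.

End PerturbedBlocks.

Theorem lemma3p3 (R : realType) (k : nat) (b : 'M[R[i]]_k)
    (c : nat -> R[i]) (d : nat -> R) :
  (0 < k)%N -> in_S b c d ->
  let a := blockmx b c d in
  (* (i) *)
  (0 <= sval_s b c d ->
     forall eps : R, 0 <= eps -> eps <= sval_s b c d ->
     forall m : nat, (0 < m)%N -> (m <= k)%N ->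
       formally_psd (mx_sub a (mx_scale eps (emx m)))) /\
  (* (ii) *)
  (0 <= sval_s b c d -> formally_psd a) /\
  (* (iii) *)
  (0 < sval_s b c d ->
     forall m : nat, (0 < m)%N ->
       exists eps : R, 0 < eps /\
         (exists (b' : 'M[R[i]]_k) (c' : nat -> R[i]) (d' : nat -> R),
            block_data b' c' d' /\
            (forall p q, (0 < p)%N -> (0 < q)%N ->
               blockmx b' c' d' p q = mx_sub a (mx_scale eps (emx m)) p q) /\
            0 < sval_s b' c' d') /\
         formally_psd (mx_sub a (mx_scale eps (emx m)))).
Proof.
case: k b => [//|K] b _ b_c_d_in_S a.
split=> [_ eps eps_ge0 eps_le m m_gt0 m_le|].
  by apply: formally_psd_sub_emx_low; rewrite ?m_gt0.
split=> [|s_gt0 m m_gt0]; first exact: formally_psd_blockmx.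
case: (leqP m K.+1) => [m_le|m_gt].
  by apply: sub_emx_low_in_S; rewrite ?m_gt0.
exact: sub_emx_high_in_S.
Qed.
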